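(* Let $G=(V,w,m)$ be a locally finite measured weighted graph with $D:=\operatorname{Deg}_{\max}<\infty$, $q:=q_{\min}>0$ and $\kappa(x,y)\ge0$ for all $x\ne y\in V$. Let $f:V\to\mathbb{R}$ be harmonic ($\Delta f=0$) with $\|\nabla f\|_\infty=1$. Let $\varepsilon\in(0,q/(4D))$ and let $x_0\neq y_0$ satisfy $f(x_0)-f(y_0)\ge d(x_0,y_0)-\varepsilon$. Then there exist $x'\in B_1(x_0)$ and $y'\in B_1(y_0)$ such that $$f(x')-f(y')>d(x',y')-\varepsilon\cdot\frac{10D}{q}\qquad\text{and}\qquad d(x',y')>d(x_0,y_0).$$
   Context: A measured weighted graph $G=(V,w,m)$: countable $V$, symmetric $w:V\times V\to[0,\infty)$ vanishing on the diagonal, $m:V\to(0,\infty)$; $x\sim y$ iff $w(x,y)>0$; locally finite means each vertex has finitely many neighbours. $q(x,y):=w(x,y)/m(x)$, $\Delta f(x):=\sum_y q(x,y)(f(y)-f(x))$, $\operatorname{Deg}_{\max}:=\sup_x\sum_y q(x,y)$, $q_{\min}:=\inf_{x\sim y}q(x,y)$. $d$ is the combinatorial graph distance and $B_1(x)=\{z:d(x,z)\le1\}$. For $x\ne y$, $\nabla_{xy}f:=(f(x)-f(y))/d(x,y)$, $\|\nabla f\|_\infty:=\sup_{x\sim y}\nabla_{xy}f$, and the Ollivier curvature is $\kappa(x,y):=\inf\{\nabla_{xy}\Delta f: \nabla_{yx}f=1,\ \|\nabla f\|_\infty=1\}$. *)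

From HB Require Import structures.
From mathcomp Require Import all_boot all_order all_algebra.
From mathcomp Require Import all_classical all_reals ereal.
Set Implicit Arguments. Unset Strict Implicit. Unset Printing Implicit Defensive.
Import Order.TTheory GRing.Theory Num.Theory.
Local Open Scope classical_set_scope.
Local Open Scope ring_scope.

Section Graph.
Variables (R : realType) (V : countType) (w : V -> V -> R) (m : V -> R).

Definition is_mwgraph : Prop :=
  (forall x y, 0 <= w x y) /\ (forall x y, w x y = w y x) /\
  (forall x, w x x = 0) /\ (forall x, 0 < m x).

Definition adj (x y : V) : Prop := 0 < w x y.

Definition nbhd (x : V) : set V := [set y | adj x y].

Definition locally_finite : Prop := forall x, finite_set (nbhd x).

Definition qq (x y : V) : R := w x y / m x.

(* Laplacian: sum over neighbours (finite by local finiteness) *)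
Definition Lap (f : V -> R) (x : V) : R :=
  \sum_(y \in nbhd x) qq x y * (f y - f x).

Definition Deg (x : V) : R := \sum_(y \in nbhd x) qq x y.

Definition Deg_max : \bar R := ereal_sup [set (Deg x)%:E | x in [set: V]].

Definition q_min : \bar R :=
  ereal_inf [set (qq xy.1 xy.2)%:E | xy in [set xy : V * V | adj xy.1 xy.2]].

Inductive walk (x : V) : V -> nat -> Prop :=
| walk0 : walk x x 0
| walkS y z n : walk x y n -> adj y z -> walk x z n.+1.

(* combinatorial graph distance, +oo if no walk *)
Definition dist (x y : V) : \bar R :=
  ereal_inf [set (n%:R)%:E | n in [set n | walk x y n]].

Definition ball1 (x : V) : set V := [set z | (dist x z <= 1)%E].

Definition grad (f : V -> R) (x y : V) : \bar R :=
  ((f x - f y)%:E / dist x y)%E.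

Definition grad_norm (f : V -> R) : \bar R :=
  ereal_sup [set grad f xy.1 xy.2 | xy in [set xy : V * V | adj xy.1 xy.2]].

Definition kappa (x y : V) : \bar R :=
  ereal_inf [set grad (Lap f) x y | f in
    [set f : V -> R | grad f y x = 1%E /\ grad_norm f = 1%E]].

End Graph.

From mathcomp Require Import all_boot all_order all_algebra.
From mathcomp Require Import all_classical all_reals ereal.
From mathcomp Require Import ring lra zify.
Import Order.TTheory GRing.Theory Num.Theory.
Local Open Scope classical_set_scope.
Local Open Scope ring_scope.

(* Argue by contradiction: assume every pair x' in B_1(x0), y' in B_1(y0) with
   d(x',y') > n := d(x0,y0) satisfies f x' - f y' <= d(x',y') - 10u, where
   u = eps D / q.  Put lam = 3u, c = 1/(1 - lam), delta = n - (f x0 - f y0) <= eps,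
   G y = max (c (f y - f y0)) (n - d(x0,y)) and H v = min_{y in B_1(y0)} G y + d(y,v).
   Then H is 1-Lipschitz with H x0 = n and H y0 = 0, so nonnegative curvature gives
   Lap H x0 <= Lap H y0.  Comparing H with c f on the neighbourhoods of y0 and x0,
   and using Lap f = 0, yields Lap H y0 <= c delta Deg y0 and
   Lap H x0 >= c (lam q(x0,x1) - delta Deg x0), where x1 is the first step of a
   geodesic from x0 to y0.  Hence
   3 eps D = lam q <= delta (Deg x0 + Deg y0) <= 2 eps D, which is absurd. *)

Set Implicit Arguments. Unset Strict Implicit. Unset Printing Implicit Defensive.

Lemma ler_fsum (R : realType) (I : choiceType) (A : set I) (F G : I -> R) :
  finite_set A -> (forall i, A i -> F i <= G i) ->
  \sum_(i \in A) F i <= \sum_(i \in A) G i.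
Proof.
move=> A_fin FG; rewrite !fsbig_finite // big_seq [leRHS]big_seq.
by apply: ler_sum => i; rewrite in_fset_set // inE; exact: FG.
Qed.

Section Graph.
Variables (R : realType) (V : countType) (w : V -> V -> R).
Hypothesis w_sym : forall x y, w x y = w y x.
Hypothesis w_diag : forall x, w x x = 0.

Lemma adj_sym x y : adj w x y -> adj w y x.
Proof. by rewrite /adj w_sym. Qed.

Lemma adj_neq x y : adj w x y -> x <> y.
Proof. by move=> + exy; rewrite exy /adj w_diag ltxx. Qed.

Lemma walk1 x y : adj w x y -> walk w x y 1.
Proof. exact: walkS (walk0 w x). Qed.

Lemma walk_cons x y z k : adj w x y -> walk w y z k -> walk w x z k.+1.
Proof.
move=> hxy; elim=> [|u v j _ IH huv]; first exact: walk1.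
exact: walkS IH huv.
Qed.

Lemma walk_rev x y k : walk w x y k -> walk w y x k.
Proof.
elim=> [|u v j _ IH huv]; first exact: walk0.
exact: walk_cons (adj_sym huv) IH.
Qed.

Lemma walk_cat x y z j k : walk w x y j -> walk w y z k -> walk w x z (j + k).
Proof.
move=> hj; elim=> [|u v i _ IH huv]; first by rewrite addn0.
by rewrite addnS; exact: walkS IH huv.
Qed.

Lemma walk0_eq x y : walk w x y 0 -> x = y.
Proof. by move=> h; inversion h. Qed.

Lemma walkS_last x y k : walk w x y k.+1 -> exists2 z, walk w x z k & adj w z y.
Proof. by move=> h; inversion h; subst; exists y0. Qed.

Definition reachable x y := exists k, walk w x y k.

Lemma reachable_refl x : reachable x x.
Proof. by exists 0%N; exact: walk0. Qed.

Lemma reachable_sym x y : reachable x y -> reachable y x.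
Proof. by case=> k h; exists k; exact: walk_rev. Qed.

Lemma reachable_trans x y z : reachable x y -> reachable y z -> reachable x z.
Proof. by case=> j h1 [k h2]; exists (j + k)%N; exact: walk_cat h1 h2. Qed.

Lemma reachable_adj x y : adj w x y -> reachable x y.
Proof. by exists 1%N; exact: walk1. Qed.

Lemma reachable_walk_length x y : reachable x y -> exists k, `[< walk w x y k >].
Proof. by case=> k hk; exists k; apply/asboolP. Qed.

(* [0] is a junk value between different connected components. *)
Definition ndist x y : nat :=
  if pselect (reachable x y) is left h then ex_minn (reachable_walk_length h)
  else 0%N.

Lemma ndist_walk x y : reachable x y -> walk w x y (ndist x y).
Proof. by rewrite /ndist; case: pselect => // h _; case: ex_minnP => k /asboolP. Qed.

Lemma ndist_min x y k : walk w x y k -> (ndist x y <= k)%N.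
Proof.
move=> hk; rewrite /ndist; case: pselect => [h|[]]; last by exists k.
by case: ex_minnP => j _; apply; apply/asboolP.
Qed.

Lemma ndist_sym x y : ndist x y = ndist y x.
Proof.
have [h|h] := pselect (reachable x y).
  apply/anti_leq/andP; split; apply: ndist_min; apply: walk_rev.
    exact/ndist_walk/reachable_sym.
  exact: ndist_walk.
have h' : ~ reachable y x by move/reachable_sym.
by rewrite /ndist; case: pselect => // _; case: pselect.
Qed.

Lemma ndist_triangle x y z : reachable x y -> reachable y z ->
  (ndist x z <= ndist x y + ndist y z)%N.
Proof. by move=> hxy hyz; apply/ndist_min/walk_cat; exact: ndist_walk. Qed.

Lemma ndist_refl x : ndist x x = 0%N.
Proof. by apply/eqP; rewrite -leqn0; apply: ndist_min; exact: walk0. Qed.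

Lemma ndist_adj x y : adj w x y -> ndist x y = 1%N.
Proof.
move=> h; apply/anti_leq; rewrite (ndist_min (walk1 h)) lt0n.
apply/eqP => e; have := ndist_walk (reachable_adj h); rewrite e => /walk0_eq.
exact: adj_neq h.
Qed.

Lemma ndist_eq0 x y : reachable x y -> ndist x y = 0%N -> x = y.
Proof. by move=> h e; have := ndist_walk h; rewrite e => /walk0_eq. Qed.

Lemma ndist_adjr y a b : adj w a b -> (ndist y a <= (ndist y b).+1)%N.
Proof.
move=> hab; have hba := reachable_adj (adj_sym hab).
have [hb|hb] := pselect (reachable y b).
  by rewrite -addn1 -(ndist_adj (adj_sym hab)) ndist_triangle.
have ha : ~ reachable y a by move=> /reachable_trans/(_ (reachable_sym hba)).
by rewrite /ndist; case: pselect.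
Qed.

Lemma dist_ndist x y : reachable x y -> dist w x y = (ndist x y)%:R%:E.
Proof.
move=> h; apply/eqP; rewrite eq_le; apply/andP; split.
  by apply: ereal_inf_lbound; exists (ndist x y) => //; exact: ndist_walk.
apply: le_ereal_inf_tmp => _ [k hk <-]; rewrite lee_fin ler_nat; exact: ndist_min.
Qed.

Lemma dist_unreachable x y : ~ reachable x y -> dist w x y = +oo%E.
Proof.
move=> h; apply/eqP; rewrite eq_le leey /=.
by apply: le_ereal_inf_tmp => _ [k hk <-]; case: h; exists k.
Qed.

Lemma in_ball1 x y : (y \in ball1 w x) <-> (y = x \/ adj w x y).
Proof.
rewrite in_setE /ball1 /=; split=> [|[->|h]]; last first.
- by rewrite dist_ndist ?(ndist_adj h) //; exact: reachable_adj.
- by rewrite dist_ndist ?ndist_refl ?lee_fin ?ler01 //; exact: reachable_refl.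
have [h|h] := pselect (reachable x y); last by rewrite dist_unreachable.
rewrite dist_ndist // lee_fin lern1 leq_eqVlt ltnS leqn0.
case/orP=> /eqP e; last by left; apply/esym/(ndist_eq0 h).
by right; have := ndist_walk h; rewrite e => /walkS_last [z /walk0_eq ->].
Qed.

Lemma ball1_center x : x \in ball1 w x.
Proof. by apply/in_ball1; left. Qed.

Lemma ball1_reachable x y : y \in ball1 w x -> reachable x y.
Proof. by case/in_ball1 => [->|/reachable_adj]; first exact: reachable_refl. Qed.

Lemma reachable_ball1 x x' y y' : x' \in ball1 w x -> y' \in ball1 w y ->
  reachable x y -> reachable x' y'.
Proof.
move=> /ball1_reachable/reachable_sym hx /ball1_reachable hy hxy.
exact: reachable_trans hx (reachable_trans hxy hy).
Qed.

Lemma ndist_ball1r x x' y : x' \in ball1 w x -> (ndist y x' <= (ndist y x).+1)%N.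
Proof. by case/in_ball1 => [->//|/adj_sym]; exact: ndist_adjr. Qed.

Lemma ndist_geodesic_step x y : reachable x y -> x <> y ->
  exists2 x1, adj w x x1 & ndist x1 y = (ndist x y).-1.
Proof.
move=> hxy nxy; have n_gt0 : (0 < ndist x y)%N.
  by rewrite lt0n; apply/eqP => /(ndist_eq0 hxy).
have := walk_rev (ndist_walk hxy); rewrite -(ltn_predK n_gt0).
case/walkS_last => x1 hy /adj_sym hx1; exists x1 => //.
apply/anti_leq; rewrite (ndist_min (walk_rev hy)) /=.
have hx1y : reachable x1 y by exists (ndist x y).-1; exact: walk_rev.
have := ndist_triangle (reachable_adj hx1) hx1y.
rewrite (ndist_adj hx1); lia.
Qed.

Lemma lip_ndist (g : V -> R) x y : (forall u v, adj w u v -> g u - g v <= 1) ->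
  reachable x y -> g x - g y <= (ndist x y)%:R.
Proof.
move=> g_lip /reachable_sym/ndist_walk; rewrite ndist_sym.
elim=> [|u v j _ IH huv]; first by rewrite subrr.
by have := g_lip _ _ (adj_sym huv); rewrite -natr1; lra.
Qed.

Definition inf_conv (s0 : V) (S : seq V) (G : V -> R) (v : V) : R :=
  \big[Num.min/G s0 + (ndist s0 v)%:R]_(s <- S) (G s + (ndist s v)%:R).

Section InfConvolution.
Variables (s0 : V) (S : seq V) (G : V -> R).

Lemma inf_conv_le s v : s \in s0 :: S -> inf_conv s0 S G v <= G s + (ndist s v)%:R.
Proof.
rewrite inE => /predU1P[->|hs]; first exact: bigmin_le_id.
exact: ge_bigmin_seq.
Qed.

Lemma le_inf_conv r v : (forall s, s \in s0 :: S -> r <= G s + (ndist s v)%:R) ->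
  r <= inf_conv s0 S G v.
Proof.
move=> h; rewrite /inf_conv big_seq.
by apply: le_bigmin => [|s hs]; apply: h; rewrite inE ?eqxx ?hs ?orbT.
Qed.

Lemma inf_conv_lip a b : adj w a b -> inf_conv s0 S G a - inf_conv s0 S G b <= 1.
Proof.
move=> hab; suff : inf_conv s0 S G a - 1 <= inf_conv s0 S G b by lra.
apply: le_inf_conv => s hs.
have := inf_conv_le a hs; have := ndist_adjr s hab; rewrite -(ler_nat R) -natr1.
lra.
Qed.

End InfConvolution.

Lemma grad_ndist (g : V -> R) x y : reachable x y -> x <> y ->
  grad w g x y = ((g x - g y) / (ndist x y)%:R)%:E.
Proof.
move=> hxy nxy; rewrite /grad dist_ndist // inver pnatr_eq0.
by case: eqP => [/(ndist_eq0 hxy)//|_]; rewrite -EFinM.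
Qed.

Lemma grad_adj (g : V -> R) x y : adj w x y -> grad w g x y = (g x - g y)%:E.
Proof.
move=> hxy; rewrite grad_ndist ?ndist_adj ?divr1 //; first exact: reachable_adj.
exact: adj_neq.
Qed.

Lemma lip_of_grad_norm (g : V -> R) : grad_norm w g = 1%E ->
  forall u v, adj w u v -> g u - g v <= 1.
Proof.
move=> hg u v huv; rewrite -lee_fin -grad_adj // -hg.
by apply: ereal_sup_ubound; exists (u, v).
Qed.

Lemma grad_norm_eq1 (g : V -> R) a b :
  (forall u v, adj w u v -> g u - g v <= 1) -> adj w a b -> g a - g b = 1 ->
  grad_norm w g = 1%E.
Proof.
move=> g_lip hab gab; apply/eqP; rewrite eq_le; apply/andP; split.
  by apply: ge_ereal_sup => _ [[u v] /= huv <-]; rewrite grad_adj // lee_fin g_lip.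
apply: le_ereal_sup_tmp; exists (grad w g a b); first by exists (a, b).
by rewrite grad_adj // gab.
Qed.

Section Laplacian.
Variable m : V -> R.
Hypothesis w_ge0 : forall x y, 0 <= w x y.
Hypothesis m_gt0 : forall x, 0 < m x.
Hypothesis w_locfin : locally_finite w.

Lemma Deg_le_Deg_max D x : Deg_max w m = D%:E -> Deg w m x <= D.
Proof. by move=> hD; rewrite -lee_fin -hD; apply: ereal_sup_ubound; exists x. Qed.

Lemma q_min_le_qq q x y : q_min w m = q%:E -> adj w x y -> q <= qq w m x y.
Proof.
by move=> hq hxy; rewrite -lee_fin -hq; apply: ereal_inf_lbound; exists (x, y).
Qed.

Lemma qq_ge0 x y : 0 <= qq w m x y.
Proof. by rewrite /qq divr_ge0 // ltW. Qed.

Lemma ler_qq_fsum x (F G : V -> R) : (forall y, adj w x y -> F y <= G y) ->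
  \sum_(y \in nbhd w x) qq w m x y * F y <= \sum_(y \in nbhd w x) qq w m x y * G y.
Proof. by move=> FG; apply: ler_fsum => // y /FG; apply: ler_wpM2l; exact: qq_ge0. Qed.

Lemma fsum_qq_affine x (g : V -> R) a b :
  \sum_(y \in nbhd w x) qq w m x y * (a * (g y - g x) + b) =
  a * Lap w m g x + b * Deg w m x.
Proof.
rewrite /Lap /Deg !mulr_fsumr -fsbig_split //.
by apply: eq_fsbigr => y _ /=; ring.
Qed.

Lemma fsum_qq_add_indicator x z (F : V -> R) e : adj w x z ->
  \sum_(y \in nbhd w x) qq w m x y * (F y + e * (y == z)%:R) =
  \sum_(y \in nbhd w x) qq w m x y * F y + e * qq w m x z.
Proof.
move=> hxz; under eq_fsbigr do rewrite mulrDr.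
rewrite fsbig_split //=; congr (_ + _).
rewrite (fsbigD1 z) // eqxx fsbig1 => [|y [_ /eqP /negPf ->]]; last by rewrite !mulr0.
by rewrite /= addr0 mulr1 mulrC.
Qed.

Lemma qq_le_Deg x y : adj w x y -> qq w m x y <= Deg w m x.
Proof.
move=> hxy; rewrite /Deg (fsbigD1 y) // lerDl.
by apply: fsumr_ge0 => z _; exact: qq_ge0.
Qed.

Lemma ball1_enum x y :
  y \in x :: finmap.enum_fset (fset_set (nbhd w x)) <-> y \in ball1 w x.
Proof.
have nbhd_enum : (y \in finmap.enum_fset (fset_set (nbhd w x))) = (y \in nbhd w x).
  by rewrite -in_fset_set.
rewrite inE nbhd_enum.
rewrite in_ball1; split=> [/predU1P[->|/set_mem h]|[->|/mem_set h]].
- by left.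
- by right.
- by rewrite eqxx.
- by rewrite h orbT.
Qed.

Lemma Lap_le_of_kappa (g : V -> R) x y : (0 <= kappa w m y x)%E ->
  reachable x y -> x <> y -> grad_norm w g = 1%E -> grad w g x y = 1%E ->
  Lap w m g x <= Lap w m g y.
Proof.
move=> k_ge0 hxy nxy g_norm g_xy.
have : (0 <= grad w (Lap w m g) y x)%E.
  by apply: le_trans k_ge0 _; apply: ereal_inf_lbound; exists g.
rewrite grad_ndist; [|exact: reachable_sym|exact: nesym].
rewrite (ndist_sym y x) lee_fin pmulr_lge0 ?subr_ge0 // invr_gt0 ltr0n lt0n.
by apply/eqP => /(ndist_eq0 hxy).
Qed.

Section FarPair.
Variables (D q eps : R) (f : V -> R) (x0 y0 : V).
Hypothesis Deg_le : forall x, Deg w m x <= D.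
Hypothesis q_le : forall x y, adj w x y -> q <= qq w m x y.
Hypothesis q_gt0 : 0 < q.
Hypothesis kappa_y0x0 : (0 <= kappa w m y0 x0)%E.
Hypothesis f_harmonic : forall x, Lap w m f x = 0.
Hypothesis f_lip : forall u v, adj w u v -> f u - f v <= 1.
Hypothesis eps_gt0 : 0 < eps.
Hypothesis eps_small : eps < q / (4 * D).
Hypothesis x0_neq_y0 : x0 <> y0.
Hypothesis x0_y0 : reachable x0 y0.

Local Notation n := (ndist x0 y0).

Hypothesis f_x0y0 : n%:R - eps <= f x0 - f y0.
Hypothesis no_far_pair : forall x' y', x' \in ball1 w x0 -> y' \in ball1 w y0 ->
  (n < ndist x' y')%N -> f x' - f y' <= (ndist x' y')%:R - eps * (10 * D / q).

Definition delta := n%:R - (f x0 - f y0).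
Definition u := eps * (D / q).
Definition lam := 3 * u.
Definition c := (1 - lam)^-1.

Lemma f_lip_ndist x y : reachable x y -> f x - f y <= (ndist x y)%:R.
Proof. exact: lip_ndist. Qed.

Lemma n_gt0 : (0 < n)%N.
Proof. by rewrite lt0n; apply/eqP => /(ndist_eq0 x0_y0). Qed.

Lemma natr_n_pred : (n.-1)%:R = n%:R - 1 :> R.
Proof. by rewrite -[in RHS](prednK n_gt0) -natr1 addrK. Qed.

Lemma delta_ge0 : 0 <= delta.
Proof. by rewrite subr_ge0; exact: f_lip_ndist. Qed.

Lemma delta_le_eps : delta <= eps.
Proof. by have := f_x0y0; rewrite /delta; lra. Qed.

Lemma q_le_D : q <= D.
Proof.
have [x1 hx1 _] := ndist_geodesic_step x0_y0 x0_neq_y0.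
exact: le_trans (q_le hx1) (le_trans (qq_le_Deg hx1) (Deg_le x0)).
Qed.

Lemma D_gt0 : 0 < D.
Proof. exact: lt_le_trans q_gt0 q_le_D. Qed.

Lemma eps_le_u : eps <= u.
Proof. by rewrite /u ler_peMr ?(ltW eps_gt0) // ler_pdivlMr // mul1r q_le_D. Qed.

Lemma mul4u_lt1 : 4 * u < 1.
Proof.
have -> : 4 * u = eps * (4 * D) / q by rewrite /u; field; rewrite lt0r_neq0.
rewrite ltr_pdivrMr // mul1r -ltr_pdivlMr //; last by rewrite mulr_gt0 // D_gt0.
Qed.

Lemma lamq_eq : lam * q = 3 * (eps * D).
Proof. by rewrite /lam /u; field; rewrite lt0r_neq0. Qed.

Lemma far_gap_eq : eps * (10 * D / q) = 10 * u.
Proof. by rewrite /u; field; rewrite lt0r_neq0. Qed.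

Lemma lam_ge0 : 0 <= lam.
Proof. by have := eps_le_u; have := eps_gt0; rewrite /lam; lra. Qed.

Lemma lam_lt1 : lam < 1.
Proof. by have := mul4u_lt1; rewrite /lam; lra. Qed.

Lemma c_gt0 : 0 < c.
Proof. by rewrite /c invr_gt0 subr_gt0 lam_lt1. Qed.

Lemma c_lam : c * (1 - lam) = 1.
Proof. by rewrite /c mulVf // subr_eq0 gt_eqF // lam_lt1. Qed.

Lemma ndist_x0_ball1 y' : y' \in ball1 w y0 -> (ndist x0 y' <= n.+1)%N.
Proof. exact: ndist_ball1r. Qed.

Lemma ndist_ball1_pair x' y' : x' \in ball1 w x0 -> y' \in ball1 w y0 ->
  (ndist x' y' <= n.+2)%N.
Proof.
move=> hx hy; have := ndist_x0_ball1 hy; have := ndist_ball1r y' hx.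
by rewrite !(ndist_sym y'); lia.
Qed.

Lemma near_y0_bounds y' : y' \in ball1 w y0 ->
  (1 - lam) * (n%:R - (ndist x0 y')%:R) <= f y' - f y0 + delta /\
  lam - 1 <= f y' - f y0.
Proof.
move=> hy; have hk := ndist_x0_ball1 hy.
have hf := f_lip_ndist (reachable_trans x0_y0 (ball1_reachable hy)).
have := eps_le_u; have := mul4u_lt1; have := delta_ge0; have := delta_le_eps.
rewrite /delta /lam; move: hk hf; rewrite leq_eqVlt ltnS => /orP[/eqP hk|hk] hf.
  have := no_far_pair (ball1_center x0) hy; rewrite hk ltnSn far_gap_eq -natr1 in hf *.
  by move/(_ isT); lra.
have hkn : 0 <= n%:R - (ndist x0 y')%:R :> R by rewrite subr_ge0 ler_nat.
have := mulr_ge0 lam_ge0 hkn; rewrite /lam; lra.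
Qed.

Lemma delta_Deg_le x : delta * Deg w m x <= eps * D.
Proof.
apply: le_trans (ler_wpM2l delta_ge0 (Deg_le x)) _.
by rewrite ler_wpM2r ?delta_le_eps // ltW // D_gt0.
Qed.

Definition G y := Num.max (c * (f y - f y0)) (n%:R - (ndist x0 y)%:R).
Definition H := inf_conv y0 (finmap.enum_fset (fset_set (nbhd w y0))) G.

Lemma H_le y v : y \in ball1 w y0 -> H v <= G y + (ndist y v)%:R.
Proof. by move/ball1_enum; exact: inf_conv_le. Qed.

Lemma le_H r v : (forall y, y \in ball1 w y0 -> r <= G y + (ndist y v)%:R) ->
  r <= H v.
Proof. by move=> h; apply: le_inf_conv => y /ball1_enum; exact: h. Qed.

Lemma H_lip a b : adj w a b -> H a - H b <= 1.
Proof. exact: inf_conv_lip. Qed.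

Lemma G_ge_f y : c * (f y - f y0) <= G y.
Proof. by rewrite le_max lexx. Qed.

Lemma G_ge_ndist y : n%:R - (ndist x0 y)%:R <= G y.
Proof. by rewrite le_max lexx orbT. Qed.

Lemma G_y0 : G y0 = 0.
Proof. by rewrite /G !subrr mulr0 maxxx. Qed.

Lemma H_y0 : H y0 = 0.
Proof.
apply/le_anti; rewrite (le_trans (H_le y0 (ball1_center y0))) /=; last first.
  by rewrite G_y0 ndist_refl addr0.
apply: le_H => y hy; have : (ndist x0 y)%:R <= n%:R + (ndist y y0)%:R :> R.
  by rewrite -natrD ler_nat (ndist_sym y); apply: ndist_triangle (ball1_reachable hy).
have := G_ge_ndist y; lra.
Qed.

Lemma H_x0 : H x0 = n%:R.
Proof.
apply/le_anti; rewrite (le_trans (H_le x0 (ball1_center y0))) /=; last first.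
  by rewrite G_y0 add0r ndist_sym.
apply: le_H => y hy; rewrite (ndist_sym y); have := G_ge_ndist y; lra.
Qed.

Lemma H_increment_y0 y' : adj w y0 y' -> H y' - H y0 <= c * (f y' - f y0) + c * delta.
Proof.
move=> hy; have hy' : y' \in ball1 w y0 by apply/in_ball1; right.
rewrite H_y0 subr0 (le_trans (H_le y' hy')) // ndist_refl addr0 ge_max.
have [hb _] := near_y0_bounds hy'.
have := ler_wpM2l (ltW c_gt0) hb; rewrite mulrA c_lam mul1r mulrDr => ->.
by rewrite lerDl mulr_ge0 ?delta_ge0 ?(ltW c_gt0).
Qed.

Lemma Lap_H_y0 : Lap w m H y0 <= c * delta * Deg w m y0.
Proof.
apply: le_trans (ler_qq_fsum H_increment_y0) _.
by rewrite fsum_qq_affine f_harmonic mulr0 add0r.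
Qed.

Section Geodesic.
Variable x1 : V.
Hypothesis x1_adj : adj w x0 x1.
Hypothesis x1_geodesic : ndist x1 y0 = n.-1.

Lemma ndist_x1_ball1 y' : y' \in ball1 w y0 -> (ndist x1 y' <= n)%N.
Proof.
move=> hy; have := ndist_ball1r x1 hy; rewrite x1_geodesic.
by rewrite !(ndist_sym x1) prednK // n_gt0.
Qed.

Lemma near_x0_bound x' y' : adj w x0 x' -> y' \in ball1 w y0 ->
  f x' - f y' - n%:R + lam * (x' == x1)%:R <= (1 - lam) * ((ndist x' y')%:R - n%:R).
Proof.
move=> hx hy; have hx' : x' \in ball1 w x0 by apply/in_ball1; right.
have hf := f_lip_ndist (reachable_ball1 hx' hy x0_y0).
have hk2 := ndist_ball1_pair hx' hy.
have := lam_ge0; have := eps_le_u; have := eps_gt0.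
case: (ltngtP n (ndist x' y')) => hk.
- have -> : (x' == x1) = false.
    by apply/eqP => ex; have := ndist_x1_ball1 hy; rewrite -ex leqNgt hk.
  rewrite mulr0; have := no_far_pair hx' hy hk; rewrite far_gap_eq.
  have : 0 <= lam * (n.+2%:R - (ndist x' y')%:R).
    by rewrite mulr_ge0 ?lam_ge0 // subr_ge0 ler_nat.
  rewrite /lam -!natr1; lra.
- have : 0 <= lam * (n%:R - (ndist x' y').+1%:R).
    by rewrite mulr_ge0 ?lam_ge0 // subr_ge0 ler_nat.
  by rewrite -natr1; case: eqP => _; rewrite ?mulr1 ?mulr0; lra.
- rewrite -hk in hf *; rewrite subrr mulr0.
  case: eqP => [ex|_]; last by rewrite mulr0; lra.
  have [_ hb] := near_y0_bounds hy.
  have := f_lip_ndist (reachable_trans (reachable_sym (reachable_adj x1_adj)) x0_y0).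
  by rewrite x1_geodesic natr_n_pred ex mulr1; lra.
Qed.

Lemma H_x0_x1 : H x0 - H x1 = 1.
Proof.
apply/le_anti; rewrite H_lip //=.
have := lip_ndist H_lip (reachable_trans (reachable_sym (reachable_adj x1_adj)) x0_y0).
by rewrite H_x0 H_y0 x1_geodesic natr_n_pred; lra.
Qed.

Lemma grad_norm_H : grad_norm w H = 1%E.
Proof. exact: grad_norm_eq1 H_lip x1_adj H_x0_x1. Qed.

Lemma grad_H : grad w H x0 y0 = 1%E.
Proof. by rewrite grad_ndist // H_x0 H_y0 subr0 divff // pnatr_eq0 -lt0n n_gt0. Qed.

Lemma H_increment_x0 x' : adj w x0 x' ->
  c * (f x' - f x0) + - (c * delta) + c * lam * (x' == x1)%:R <= H x' - H x0.
Proof.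
move=> hx; rewrite H_x0 lerBrDl; apply: le_H => y hy.
have := ler_wpM2l (ltW c_gt0) (near_x0_bound hx hy).
rewrite mulrA c_lam mul1r (ndist_sym y); have := G_ge_f y.
rewrite /delta; lra.
Qed.

Lemma Lap_H_x0 : c * (lam * qq w m x0 x1 - delta * Deg w m x0) <= Lap w m H x0.
Proof.
apply: le_trans (ler_qq_fsum H_increment_x0).
by rewrite fsum_qq_add_indicator // fsum_qq_affine f_harmonic; lra.
Qed.

Lemma geodesic_absurd : False.
Proof.
have := Lap_le_of_kappa kappa_y0x0 x0_y0 x0_neq_y0 grad_norm_H grad_H.
move/(le_trans Lap_H_x0)/le_trans/(_ Lap_H_y0); rewrite -mulrA ler_pM2l ?c_gt0 //.
have := ler_wpM2l lam_ge0 (q_le x1_adj); rewrite lamq_eq.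
have := delta_Deg_le x0; have := delta_Deg_le y0; have := mulr_gt0 eps_gt0 D_gt0.
lra.
Qed.

End Geodesic.

Lemma far_pair_absurd : False.
Proof.
have [x1 hx1 hx1y0] := ndist_geodesic_step x0_y0 x0_neq_y0.
exact: geodesic_absurd hx1 hx1y0.
Qed.

End FarPair.

End Laplacian.

End Graph.

Theorem lemma2p3 (R : realType) (V : countType) (w : V -> V -> R) (m : V -> R)
  (D q eps : R) (f : V -> R) (x0 y0 : V) :
  is_mwgraph w m -> locally_finite w ->
  Deg_max w m = D%:E -> q_min w m = q%:E -> 0 < q ->
  (forall x y, x <> y -> (0 <= kappa w m x y)%E) ->
  (forall x, Lap w m f x = 0) -> grad_norm w f = 1%E ->
  0 < eps -> eps < q / (4 * D) ->
  x0 <> y0 -> ((f x0 - f y0)%:E >= dist w x0 y0 - eps%:E)%E ->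
  exists x' y', x' \in ball1 w x0 /\ y' \in ball1 w y0 /\
    ((f x' - f y')%:E > dist w x' y' - (eps * (10 * D / q))%:E)%E /\
    (dist w x' y' > dist w x0 y0)%E.
Proof.
move=> [w_ge0 [w_sym [w_diag m_gt0]]] w_locfin Deg_max_D q_min_q q_gt0 kappa_ge0.
move=> f_harmonic f_norm eps_gt0 eps_small x0_neq_y0 f_x0y0.
have x0_y0 : reachable w x0 y0.
  by apply: contrapT => /dist_unreachable dist_oo; move: f_x0y0; rewrite dist_oo.
apply: contrapT => no_good_pair.
apply: (far_pair_absurd w_sym w_diag w_ge0 m_gt0 w_locfin _ _ q_gt0
  (kappa_ge0 _ _ (nesym x0_neq_y0)) f_harmonic _ eps_gt0 eps_small x0_neq_y0 x0_y0).
- by move=> x; exact: Deg_le_Deg_max.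
- by move=> x y; exact: q_min_le_qq.
- exact: lip_of_grad_norm.
- by rewrite -lee_fin EFinB -dist_ndist.
move=> x' y' hx hy hfar; rewrite leNgt; apply/negP => hgap; apply: no_good_pair.
have hxy := reachable_ball1 w_sym w_diag hx hy x0_y0.
exists x', y'; do 2!split => //.
by rewrite !dist_ndist // -EFinB !lte_fin ltr_nat.
Qed.
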